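(* For every distribution $q$ over $[n]$ and every $x\in(0,1)$, \[ \max_{S\subseteq[n]:\ q(S)\ge x} R(q,S)\ \ge\ \frac{\|q_{-x}\|_{1/2}}{(\log_2(n/x)+1)^2}-4 . \]
   Context: For nonempty $S\subseteq[n]$, $q(S)=\sum_{i\in S}q_i$, $M(q,S)=\max_{i\in S}q_i$ and $R(q,S)=\big\lfloor \frac{q(S)}{2M(q,S)}\big\rfloor$. For $x\ge0$, $q_{-x}$ is the vector obtained from $q$ by iteratively removing its smallest entries, stopping just before the total of the removed entries would exceed $x$. For a nonnegative vector $v$ and $r\in(0,1)$, $\|v\|_r=(\sum_i v_i^r)^{1/r}$. *)

From mathcomp Require Import all_boot all_order all_algebra.
From mathcomp Require Import all_classical all_reals all_analysis.
Set Implicit Arguments. Unset Strict Implicit. Unset Printing Implicit Defensive.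
Import Order.TTheory GRing.Theory Num.Theory.
Local Open Scope ring_scope.

Section Defs.
Variable R : realType.
Variable n : nat.

Definition qS (q : 'I_n -> R) (S : {set 'I_n}) : R := \sum_(i in S) q i.

(* M(q,S) = max_{i in S} q_i  (only used for nonempty S; entries are >= 0) *)
Definition qM (q : 'I_n -> R) (S : {set 'I_n}) : R := \big[Num.max/0]_(i in S) q i.

Definition Rqs (q : 'I_n -> R) (S : {set 'I_n}) : int :=
  Num.floor (qS q S / (2 * qM q S)).
End Defs.

Fixpoint remove_small {R : realType} (x : R) (s : seq R) : seq R :=
  match s with
  | [::] => [::]
  | a :: s' => if a <= x then remove_small (x - a) s' else s
  end.

(* q_{-x}, as the (ascending) list of remaining entries *)
Definition q_minus {R : realType} {n : nat} (q : 'I_n -> R) (x : R) : seq R :=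
  remove_small x (sort <=%R [seq q i | i <- enum 'I_n]).

Definition rnorm {R : realType} (r : R) (v : seq R) : R :=
  (\sum_(a <- v) a `^ r) `^ r^-1.

Definition log2 {R : realType} (y : R) : R := ln y / ln 2.

From mathcomp Require Import all_boot all_order all_algebra.
From mathcomp Require Import all_classical all_reals all_analysis.
From mathcomp Require Import ring lra.
Import Order.TTheory GRing.Theory Num.Theory.
Set Implicit Arguments. Unset Strict Implicit. Unset Printing Implicit Defensive.
Local Open Scope ring_scope.

(* Proof of Lemma C.4.  Sort the entries of q increasingly as w_0 <= ... <=
   w_(n-1); q_(-x) is the tail (w_r, ..., w_(n-1)) left after removing a prefix
   of mass c <= x, and ||q_(-x)||_(1/2) = (sum_(k >= r) sqrt w_k)^2 =: X.
   Put L = log2 (n/x) + 1 and B = X / L^2 - 4.  If B <= 0 the whole index set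
   is admissible.  Otherwise assume no admissible S has R(q,S) >= B.  For
   every k >= r the level set {i | q_i <= w_k} has mass at least
   w_0 + ... + w_k > x and maximum w_k, so it is admissible, and R < B gives
   w_0 + ... + w_k <= A w_k with A = 2 (B + 1).  A telescoping square-root
   estimate turns these prefix bounds into sum_(k >= r) sqrt w_k <= 2 sqrt A,
   i.e. X <= 4 A = 8 (X / L^2 - 3); with X <= n (Cauchy-Schwarz) this forces
   L^2 < 8 while X > 4 forces L > 3, a contradiction. *)

Section PrefixSums.
Variable R : realType.
Implicit Types (s v w : seq R) (x A c : R).

Lemma remove_smallE x s : 0 <= x ->
  exists r, [/\ remove_small x s = drop r s, \sum_(b <- take r s) b <= x &
    (r < size s)%N -> x < \sum_(b <- take r.+1 s) b].
Proof.
elim: s x => [|a s IH] x x0 /=; first by exists 0%N; rewrite big_nil.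
case: ifP => ax.
  have [|r [-> le_x lt_x]] := IH (x - a); first by rewrite subr_ge0.
  exists r.+1; rewrite /= !big_cons -lerBrDl; split => // /lt_x.
  by rewrite ltrBlDl.
exists 0%N; rewrite take0 big_nil; split => // _.
by rewrite /= take0 big_seq1 ltNge ax.
Qed.

Lemma sum_seq_ge0 s : all (fun b => 0 <= b) s -> 0 <= \sum_(b <- s) b.
Proof. by move=> s0; rewrite big_seq sumr_ge0 // => b /(allP s0). Qed.

Lemma sum_take_mono s k m : all (fun b => 0 <= b) s -> (k <= m)%N ->
  \sum_(b <- take k s) b <= \sum_(b <- take m s) b.
Proof.
move=> s0 /subnKC <-; rewrite takeD big_cat lerDl sum_seq_ge0 //.
by apply/allP => b /mem_take /mem_drop /(allP s0).
Qed.

Lemma sum_drop_le s k : all (fun b => 0 <= b) s ->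
  \sum_(b <- drop k s) b <= \sum_(b <- s) b.
Proof.
move=> s0; rewrite -{2}(cat_take_drop k s) big_cat lerDr sum_seq_ge0 //.
by apply/allP => b /mem_take /(allP s0).
Qed.

Lemma sorted_take_le s k : sorted <=%R s -> (k < size s)%N ->
  all (fun b => b <= nth 0 s k) (take k.+1 s).
Proof.
move=> s_sorted lt_k; apply/(all_nthP 0) => i; rewrite size_take_min => lt_i.
have le_ik : (i <= k)%N by move: lt_i; rewrite leq_min ltnS => /andP[].
rewrite nth_take //; apply: (sorted_leq_nth le_trans lexx) => //.
by rewrite inE (leq_ltn_trans le_ik).
Qed.

Lemma sqrt_increment A c a : 0 <= A -> 0 <= c -> 0 <= a -> c + a <= A * a ->
  Num.sqrt a <= 2 * Num.sqrt A * (Num.sqrt (c + a) - Num.sqrt c).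
Proof.
move=> A0 c0 a0 ca_le.
set s := Num.sqrt a; set t := Num.sqrt (c + a); set u := Num.sqrt c.
set g := Num.sqrt A.
have [s0 t0 u0 g0] : [/\ 0 <= s, 0 <= t, 0 <= u & 0 <= g] by rewrite !sqrtr_ge0.
have ss : s ^+ 2 = a by rewrite sqr_sqrtr.
have tt : t ^+ 2 = c + a by rewrite sqr_sqrtr ?addr_ge0.
have uu : u ^+ 2 = c by rewrite sqr_sqrtr.
have ut : u <= t by rewrite ler_sqrt ?lerDl ?addr_ge0.
have tgs : t <= g * s.
  by rewrite -(ler_pXn2r (_ : 0 < 2)%N) ?nnegrE ?mulr_ge0 // exprMn tt !sqr_sqrtr.
(* s^2 = (t - u)(t + u) <= 2 t (t - u) <= 2 g s (t - u); then divide by s *)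
have s2_le : s ^+ 2 <= 2 * g * s * (t - u) by nra.
have [->|s_gt0] := eqVneq s 0; first by rewrite mulr_ge0 ?subr_ge0 ?mulr_ge0.
by rewrite -(ler_pM2r (_ : 0 < s)) ?lt_def ?s_gt0 //; nra.
Qed.

Lemma sum_sqrt_telescope A c v : 0 <= A -> 0 <= c -> all (fun b => 0 <= b) v ->
  (forall j, (j < size v)%N -> c + \sum_(b <- take j.+1 v) b <= A * nth 0 v j) ->
  \sum_(a <- v) Num.sqrt a
    <= 2 * Num.sqrt A * (Num.sqrt (c + \sum_(b <- v) b) - Num.sqrt c).
Proof.
move=> A0; elim: v c => [|a v IH] c c0 /=.
  by rewrite !big_nil addr0 subrr mulr0.
case/andP => a0 v0 prefix_le; rewrite !big_cons.
have head_le : c + a <= A * a.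
  by have := prefix_le 0%N isT; rewrite /= take0 big_seq1.
have tail_le : forall j, (j < size v)%N ->
    (c + a) + \sum_(b <- take j.+1 v) b <= A * nth 0 v j.
  by move=> j lt_j; have := prefix_le j.+1 lt_j; rewrite /= big_cons addrA.
have := IH (c + a) (addr_ge0 c0 a0) v0 tail_le; rewrite addrA.
have := sqrt_increment A0 c0 a0 head_le; lra.
Qed.

Lemma sum_sqrt_drop_sqr_le A w r : 0 <= A -> all (fun b => 0 <= b) w ->
  (forall k, (r <= k < size w)%N -> \sum_(b <- take k.+1 w) b <= A * nth 0 w k) ->
  (\sum_(a <- drop r w) Num.sqrt a) ^+ 2 <= 4 * A * \sum_(b <- w) b.
Proof.
move=> A0 w0 prefix_le.
have c0 : 0 <= \sum_(b <- take r w) b.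
  by rewrite sum_seq_ge0 //; apply/allP => b /mem_take /(allP w0).
have drop0 : all (fun b => 0 <= b) (drop r w).
  by apply/allP => b /mem_drop /(allP w0).
set c := \sum_(b <- take r w) b in c0 *.
have shifted_le : forall j, (j < size (drop r w))%N ->
    c + \sum_(b <- take j.+1 (drop r w)) b <= A * nth 0 (drop r w) j.
  move=> j; rewrite size_drop ltn_subRL => lt_j.
  by rewrite nth_drop -big_cat -takeD addnS prefix_le ?leq_addr.
have := sum_sqrt_telescope A0 c0 drop0 shifted_le.
rewrite -big_cat cat_take_drop => sqrt_le.
set p := \sum_(a <- drop r w) Num.sqrt a in sqrt_le *.
have p0 : 0 <= p by rewrite sumr_ge0 // => *; exact: sqrtr_ge0.
have g0 := sqrtr_ge0 A; have u0 := sqrtr_ge0 c.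
have p_le : p <= 2 * Num.sqrt A * Num.sqrt (\sum_(b <- w) b) by nra.
have := lerXn2r 2 p0 (le_trans p0 p_le) p_le.
by rewrite !exprMn !sqr_sqrtr ?sum_seq_ge0 //; lra.
Qed.

Lemma sum_sqrt_sqr_le v : all (fun b => 0 <= b) v ->
  (\sum_(a <- v) Num.sqrt a) ^+ 2 <= (size v)%:R * \sum_(a <- v) a.
Proof.
elim: v => [|a v IH] /=; first by rewrite !big_nil expr0n mul0r.
case/andP => a0 v0; have := IH v0; rewrite !big_cons -natr1.
have S0 := sum_seq_ge0 v0.
have t0 : 0 <= \sum_(b <- v) Num.sqrt b by rewrite sumr_ge0 // => *; exact: sqrtr_ge0.
set t := \sum_(b <- v) Num.sqrt b in t0 *; set S := \sum_(b <- v) b in S0 *.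
set k := (size v)%:R; have k0 : 0 <= k by rewrite ler0n.
have s0 := sqrtr_ge0 a; have ss : Num.sqrt a ^+ 2 = a by rewrite sqr_sqrtr.
rewrite -{2}ss => IHv.
(* the cross term: 2 t s <= S + k s^2, by AM-GM when k > 0 *)
have cross : 2 * t * Num.sqrt a <= S + k * Num.sqrt a ^+ 2.
  have [k_eq0|k_gt0] := eqVneq k 0.
    move: IHv; rewrite k_eq0 mul0r => t2_le0.
    have -> : t = 0 by apply/eqP; rewrite -sqrf_eq0 eq_le t2_le0 sqr_ge0.
    by rewrite mulr0 mul0r addr_ge0 ?mul0r.
  have kp : 0 < k by rewrite lt_def k_gt0 k0.
  rewrite -(ler_pM2r kp); have := sqr_ge0 (t - k * Num.sqrt a); nra.
nra.
Qed.

Lemma sum_sqrt_drop_sqr_le_size w r : all (fun b => 0 <= b) w ->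
  (\sum_(a <- drop r w) Num.sqrt a) ^+ 2 <= (size w)%:R * \sum_(b <- w) b.
Proof.
move=> w0; have drop0 : all (fun b => 0 <= b) (drop r w).
  by apply/allP => b /mem_drop /(allP w0).
apply: (le_trans (sum_sqrt_sqr_le drop0)); rewrite ler_pM ?sum_seq_ge0 //.
- by rewrite ler_nat size_drop leq_subr.
- exact: sum_drop_le.
Qed.

Lemma rnorm_half v : all (fun b => 0 <= b) v ->
  rnorm (2^-1) v = (\sum_(a <- v) Num.sqrt a) ^+ 2.
Proof.
move=> v0; rewrite /rnorm invrK -[2]/(2%:R) powR_mulrn ?sumr_ge0 //.
- by congr (_ ^+ 2); apply: eq_big_seq => b /(allP v0) /powR12_sqrt.
- by move=> *; exact: powR_ge0.
Qed.
End PrefixSums.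

Section LevelSets.
Variables (R : realType) (n : nat) (q : 'I_n -> R).
Hypothesis q_ge0 : forall i, 0 <= q i.

Definition sorted_values : seq R := sort <=%R [seq q i | i <- enum 'I_n].

Definition level_set (a : R) : {set 'I_n} := [set i | q i <= a].

Lemma perm_sorted_values : perm_eq sorted_values [seq q i | i <- enum 'I_n].
Proof. by rewrite perm_sort. Qed.

Lemma sorted_sorted_values : sorted <=%R sorted_values.
Proof. exact/sort_sorted/le_total. Qed.

Lemma size_sorted_values : size sorted_values = n.
Proof. by rewrite size_sort size_map size_enum_ord. Qed.

Lemma sorted_valuesP a : reflect (exists i, q i = a) (a \in sorted_values).
Proof.
rewrite (perm_mem perm_sorted_values); apply: (iffP mapP) => [[i _ ->]|[i <-]].
  by exists i.
by exists i; rewrite ?mem_enum.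
Qed.

Lemma sorted_values_ge0 : all (fun b => 0 <= b) sorted_values.
Proof. by apply/allP => b /sorted_valuesP [i <-]. Qed.

Lemma sum_sorted_values : \sum_(b <- sorted_values) b = \sum_i q i.
Proof. by rewrite (perm_big _ perm_sorted_values) big_map big_enum. Qed.

Lemma qM_level_set a : a \in sorted_values -> qM q (level_set a) = a.
Proof.
case/sorted_valuesP => i <-; apply/le_anti/andP; split.
  by apply: bigmax_le => // j; rewrite inE.
by apply: le_bigmax_cond; rewrite inE.
Qed.

Lemma qS_level_set k : (k < n)%N ->
  \sum_(b <- take k.+1 sorted_values) b
    <= qS q (level_set (nth 0 sorted_values k)).
Proof.
move=> lt_kn; set a := nth 0 sorted_values k.
have -> : qS q (level_set a) = \sum_(b <- sorted_values | b <= a) b.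
  rewrite (perm_big _ perm_sorted_values) big_map big_enum_cond /qS.
  by apply: eq_bigl => i; rewrite inE.
have all_le : all (fun b => b <= a) (take k.+1 sorted_values).
  by apply: sorted_take_le; rewrite ?sorted_sorted_values ?size_sorted_values.
rewrite -(all_filterP all_le) big_filter.
rewrite -[in X in _ <= X](cat_take_drop k.+1 sorted_values) big_cat /= lerDl.
by rewrite big_seq_cond sumr_ge0 // => b /andP[/mem_drop /(allP sorted_values_ge0)].
Qed.

Lemma Rqs_ge0 S : 0 <= Rqs q S.
Proof.
rewrite /Rqs floor_ge0 divr_ge0 ?mulr_ge0 ?sumr_ge0 //.
by rewrite /qM; elim/big_ind: _ => // y z y0 z0; rewrite le_max y0.
Qed.

Lemma whole_set_witness (x B : R) : \sum_i q i = 1 -> x <= 1 -> B <= 0 ->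
  exists S : {set 'I_n},
    [/\ S != finset.set0, x <= qS q S & B <= (Rqs q S)%:~R].
Proof.
move=> q_sum1 x_le1 B_le0; exists [set: 'I_n]; split.
- apply/set0Pn; case: n q q_ge0 q_sum1 => [q' _|m q' _ _].
    by rewrite big_ord0 => /eqP; rewrite eq_sym oner_eq0.
  by exists ord0.
- by rewrite /qS (eq_bigl _ _ (fun i => finset.in_setT i)) q_sum1.
- by rewrite (le_trans B_le0) // ler0z Rqs_ge0.
Qed.

Lemma qS_lt_of_Rqs_lt S B : 0 < qM q S -> (Rqs q S)%:~R < B ->
  qS q S < 2 * (B + 1) * qM q S.
Proof.
move=> M_gt0 Rqs_lt.
have : qS q S / (2 * qM q S) < B + 1.
  by apply: (lt_le_trans (floorD1_gt _)); rewrite intrD lerD2r ltW.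
by rewrite ltr_pdivrMr ?mulr_gt0 // mulrAC mulrC.
Qed.

(* If no admissible set reaches value B, then for every k whose prefix
   mass exceeds x, the k+1 smallest values have mass at most 2 (B + 1) times
   the k-th one: otherwise the level set of that value would be a witness. *)
Lemma prefix_bound_of_no_witness x B k : 0 < x -> (k < n)%N ->
  x < \sum_(b <- take k.+1 sorted_values) b ->
  ~ (exists S : {set 'I_n},
       [/\ S != finset.set0, x <= qS q S & B <= (Rqs q S)%:~R]) ->
  \sum_(b <- take k.+1 sorted_values) b <= 2 * (B + 1) * nth 0 sorted_values k.
Proof.
move=> x_gt0 lt_kn x_lt no_witness; set a := nth 0 sorted_values k.
have a_in : a \in sorted_values by rewrite mem_nth ?size_sorted_values.
have [i qi] := sorted_valuesP a a_in.
have mass_le := qS_level_set lt_kn; rewrite -/a in mass_le.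
have a_gt0 : 0 < a.
  rewrite ltNge; apply/negP => a_le0; move: x_lt; apply/negP; rewrite -leNgt.
  have all_le : all (fun b => b <= a) (take k.+1 sorted_values).
    by apply: sorted_take_le; rewrite ?sorted_sorted_values ?size_sorted_values.
  rewrite (le_trans _ (ltW x_gt0)) // big_seq sumr_le0 // => b /(allP all_le).
  by move/le_trans; apply.
have Rqs_lt : (Rqs q (level_set a))%:~R < B.
  rewrite ltNge; apply/negP => B_le; apply: no_witness; exists (level_set a).
  split=> //; last exact: ltW (lt_le_trans x_lt mass_le).
  by apply/set0Pn; exists i; rewrite inE qi.
apply: (le_trans mass_le); apply: ltW.
have M_gt0 : 0 < qM q (level_set a) by rewrite qM_level_set.
by have := qS_lt_of_Rqs_lt M_gt0 Rqs_lt; rewrite qM_level_set.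
Qed.
End LevelSets.

(* The final arithmetic: with L = log2 N + 1 and X / L^2 > 4, the bounds
   X <= N and X <= 8 (X / L^2 - 3) are incompatible, because X > 4 forces
   N > 4, hence L > 3 and L^2 > 8. *)
Lemma log_bound_absurd (R : realType) (N X : R) : 1 <= N -> X <= N ->
  4 < X / (log2 N + 1) ^+ 2 -> X <= 8 * (X / (log2 N + 1) ^+ 2 - 3) -> False.
Proof.
move=> N_ge1 X_le_N; set L := log2 N + 1; set y := X / L ^+ 2 => y_gt4 X_le.
have ln2_gt0 : 0 < ln (2 : R) by apply: ln_gt0; lra.
have L_ge1 : 1 <= L.
  by rewrite /L /log2 lerDr; apply: divr_ge0; [apply: ln_ge0|apply: ltW].
have L2_ge1 : 1 <= L ^+ 2 by rewrite expr_ge1 // (le_trans ler01 L_ge1).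
have X_eq : X = y * L ^+ 2 by rewrite /y divfK // gt_eqF // (lt_le_trans ltr01).
have N_gt4 : 4 < N by nra.
have L_gt3 : 3 < L.
  have ln4 : ln (4 : R) = ln 2 *+ 2 by rewrite -lnXn //; congr ln; lra.
  have : ln (4 : R) < ln N by rewrite ltr_ln ?posrE //; lra.
  rewrite ln4 /L /log2 mulr2n => lt_ln.
  have : 2 < ln N / ln 2 by rewrite ltr_pdivlMr //; lra.
  lra.
have L2_gt9 : 9 < L ^+ 2 by rewrite expr2; nra.
have : y * 9 < y * L ^+ 2 by rewrite ltr_pM2l; lra.
lra.
Qed.

Theorem lemmaC4 (R : realType) (n : nat) (q : 'I_n -> R)
  (hq0 : forall i, 0 <= q i) (hq1 : \sum_i q i = 1)
  (x : R) (hx0 : 0 < x) (hx1 : x < 1) :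
  exists S : {set 'I_n},
    [/\ S != finset.set0, x <= qS q S &
        rnorm (2^-1) (q_minus q x) / (log2 (n%:R / x) + 1) ^+ 2 - 4
          <= (Rqs q S)%:~R].
Proof.
set w := sorted_values q.
have w0 : all (fun b => 0 <= b) w := sorted_values_ge0 hq0.
have sum_w : \sum_(b <- w) b = 1 by rewrite sum_sorted_values.
have size_w : size w = n := size_sorted_values q.
(* q_(-x) = drop r w, where the removed prefix has mass <= x < 1 *)
have [r [removedE removed_le removed_gt]] := remove_smallE w (ltW hx0).
have lt_r : (r < size w)%N.
  rewrite ltnNge; apply/negP => le_r; move: removed_le.
  by rewrite take_oversize // sum_w; lra.
have drop0 : all (fun b => 0 <= b) (drop r w).
  by apply/allP => b /mem_drop /(allP w0).
set X := rnorm (2^-1) (q_minus q x).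
have X_eq : X = (\sum_(a <- drop r w) Num.sqrt a) ^+ 2.
  by rewrite /X -(rnorm_half drop0) -removedE.
have X_le_N : X <= n%:R / x.
  rewrite X_eq (le_trans (sum_sqrt_drop_sqr_le_size r w0)) // sum_w size_w mulr1.
  by rewrite ler_pdivlMr // ler_piMr // ltW.
set L := log2 (n%:R / x) + 1.
have [B_le0|B_gt0] := lerP (X / L ^+ 2 - 4) 0.
  by have := whole_set_witness hq0 hq1 (ltW hx1) B_le0; apply.
apply: contrapT => no_witness.
have A_ge0 : 0 <= 2 * (X / L ^+ 2 - 4 + 1) by lra.
have prefix_le : forall k, (r <= k < size w)%N ->
    \sum_(b <- take k.+1 w) b <= 2 * (X / L ^+ 2 - 4 + 1) * nth 0 w k.
  move=> k /andP[le_rk]; rewrite size_w => lt_kn.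
  apply: (prefix_bound_of_no_witness hq0 hx0 lt_kn _ no_witness).
  exact: lt_le_trans (removed_gt lt_r) (sum_take_mono w0 (le_rk : r < k.+1)%N).
have := sum_sqrt_drop_sqr_le A_ge0 w0 prefix_le.
rewrite -X_eq sum_w mulr1 => X_le_A.
have N_ge1 : 1 <= n%:R / x.
  rewrite ler_pdivlMr // mul1r (le_trans (ltW hx1)) // ler1n -size_w.
  exact: leq_ltn_trans (leq0n r) lt_r.
by apply: (log_bound_absurd N_ge1 X_le_N); lra.
Qed.
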